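(* Let $a,b\in\mathbb{C}$ and let $u(\tau)$ be a solution of $$u''=\frac{(u')^2}{u}-\frac{u'}{\tau}+\frac1\tau\bigl(-8u^2+2ab\bigr)+\frac{b^2}{u}.$$ If $\operatorname{Re}u(\tau)>0$ for all $\tau>0$, then $u$ has no poles for $\tau>0$. *)

(* u is a complex-valued function of the real
   variable tau; derivatives are Coquelicot's is_derive for R -> C
   (C = R*R as a normed R-module). *)
From Stdlib Require Export Reals.
From Coquelicot Require Export Coquelicot.
Open Scope R_scope.

Definition PIII_eq (a b : C) (u du d2u : R -> C) (tau : R) : Prop :=
  is_derive u tau (du tau) /\ is_derive du tau (d2u tau) /\
  d2u tau = Cplus (Cplus (Cplus
              (Cdiv (Cmult (du tau) (du tau)) (u tau))
              (Copp (Cdiv (du tau) (RtoC tau))))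
              (Cmult (Cinv (RtoC tau))
                     (Cplus (Copp (Cmult (RtoC 8) (Cmult (u tau) (u tau))))
                            (Cmult (RtoC 2) (Cmult a b)))))
              (Cdiv (Cmult b b) (u tau)).

Definition is_pole (u : R -> C) (p : R) : Prop :=
  filterlim (fun t => Cmod (u t)) (locally' p) (Rbar_locally p_infty).

Definition isolated_in (P : R -> Prop) (p : R) : Prop :=
  exists eps : R, 0 < eps /\ forall t, 0 < Rabs (t - p) < eps -> ~ P t.

From Stdlib Require Import Reals Lra Psatz.
From Coquelicot Require Import Coquelicot.
Open Scope R_scope.

(* Along a solution, w(tau) = tau Re(u'/u) satisfies
   (tau u'/u)' = -8 u + 2ab/u + tau b^2/u^2.
   Approaching a pole p from the left, |u| >= 1 and Re u > 0, so w' <= |2ab| + p |b^2|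
   and w stays bounded above.  Then (ln |u|)' = Re(u'/u) = w/tau is bounded above,
   so ln |u| cannot tend to +oo at p. *)

Section ProductDerivative.
Context {U V : NormedModule R_AbsRing}.

Lemma is_derive_fst (f : R -> U * V) t l :
  is_derive f t l -> is_derive (fun s => fst (f s)) t (fst l).
Proof.
intro Hf.
eapply filterdiff_ext_lin; [apply (filterdiff_comp' f fst t (fun y => scal y l) fst Hf) |].
- apply filterdiff_linear. split; try easy.
  exists 1; split; [lra |]. intros [x y]. rewrite Rmult_1_l.
  eapply Rle_trans; [apply Rmax_l | apply norm_prod].
- easy.
Qed.

Lemma is_derive_snd (f : R -> U * V) t l :
  is_derive f t l -> is_derive (fun s => snd (f s)) t (snd l).
Proof.
intro Hf.
eapply filterdiff_ext_lin; [apply (filterdiff_comp' f snd t (fun y => scal y l) snd Hf) |].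
- apply filterdiff_linear. split; try easy.
  exists 1; split; [lra |]. intros [x y]. rewrite Rmult_1_l.
  eapply Rle_trans; [apply Rmax_r | apply norm_prod].
- easy.
Qed.
End ProductDerivative.

Lemma is_derive_Re (u : R -> C) t l :
  is_derive u t l -> is_derive (fun s => Re (u s)) t (Re l).
Proof. exact (is_derive_fst u t l). Qed.

Lemma is_derive_Im (u : R -> C) t l :
  is_derive u t l -> is_derive (fun s => Im (u s)) t (Im l).
Proof. exact (is_derive_snd u t l). Qed.

Lemma Re_Cdiv (z w : C) :
  Re (z / w)%C = (Re z * Re w + Im z * Im w) / (Re w ^ 2 + Im w ^ 2).
Proof. destruct z as [x y], w as [x' y']. cbn. unfold Rdiv. ring. Qed.

Lemma Re2_plus_Im2_pos (z : C) : z <> 0%C -> 0 < Re z ^ 2 + Im z ^ 2.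
Proof. intro Hz. rewrite <- Cmod2_alt. apply pow_lt, Cmod_gt_0, Hz. Qed.

Lemma is_derive_Re_Cdiv (f g : R -> C) t df dg :
  is_derive f t df -> is_derive g t dg -> g t <> 0%C ->
  is_derive (fun s => Re (f s / g s)%C) t (Re ((df * g t - f t * dg) / (g t * g t))%C).
Proof.
intros Hf Hg Hg0.
pose proof (Re2_plus_Im2_pos _ Hg0) as HN.
apply is_derive_ext with
  (fun s => (Re (f s) * Re (g s) + Im (f s) * Im (g s)) / (Re (g s) ^ 2 + Im (g s) ^ 2)).
{ intro s. symmetry. apply Re_Cdiv. }
pose proof (is_derive_Re f t df Hf) as Hx. pose proof (is_derive_Im f t df Hf) as Hy.
(* auto_derive cannot reify [fst (f s)]: the components are named first. *)
pose proof (is_derive_Re g t dg Hg) as Hx'. pose proof (is_derive_Im g t dg Hg) as Hy'.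
set (x := fun s => Re (f s)) in *. set (y := fun s => Im (f s)) in *.
set (x' := fun s => Re (g s)) in *. set (y' := fun s => Im (g s)) in *.
change (is_derive (fun s => (x s * x' s + y s * y' s) / (x' s ^ 2 + y' s ^ 2)) t
  (Re ((df * g t - f t * dg) / (g t * g t))%C)).
change (is_derive x t (Re df)) in Hx. change (is_derive y t (Im df)) in Hy.
change (is_derive x' t (Re dg)) in Hx'. change (is_derive y' t (Im dg)) in Hy'.
change (0 < x' t ^ 2 + y' t ^ 2) in HN.
auto_derive.
- repeat split; try (eexists; eassumption). lra.
- rewrite (is_derive_unique (fun s : R => x s) _ _ Hx), (is_derive_unique (fun s : R => y s) _ _ Hy),
    (is_derive_unique (fun s : R => x' s) _ _ Hx'), (is_derive_unique (fun s : R => y' s) _ _ Hy').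
  unfold x, y, x', y' in *. destruct (f t) as [a b], (g t) as [c d], df as [da db], dg as [dc dd].
  cbn in *. field. split; nra.
Qed.

Lemma is_derive_ln_Cmod (u : R -> C) t du :
  is_derive u t du -> u t <> 0%C ->
  is_derive (fun s => ln (Cmod (u s))) t (Re (du / u t)%C).
Proof.
intros Hu Hu0.
pose proof (Re2_plus_Im2_pos _ Hu0) as HN.
pose proof (is_derive_Re u t du Hu) as Hx. pose proof (is_derive_Im u t du Hu) as Hy.
set (x := fun s => Re (u s)) in *. set (y := fun s => Im (u s)) in *.
change (is_derive x t (Re du)) in Hx. change (is_derive y t (Im du)) in Hy.
change (0 < x t ^ 2 + y t ^ 2) in HN.
change (is_derive (fun s => ln (sqrt (x s ^ 2 + y s ^ 2))) t (Re (du / u t)%C)).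
pose proof (sqrt_lt_R0 _ HN) as HS. pose proof (sqrt_sqrt _ (Rlt_le _ _ HN)) as ES.
auto_derive.
- replace (x t * (x t * 1) + y t * (y t * 1)) with (x t ^ 2 + y t ^ 2) by ring.
  repeat split; try (eexists; eassumption); assumption.
- replace (x t * (x t * 1) + y t * (y t * 1)) with (x t ^ 2 + y t ^ 2) by ring.
  rewrite (is_derive_unique (fun s : R => x s) _ _ Hx), (is_derive_unique (fun s : R => y s) _ _ Hy),
    Re_Cdiv.
  change (Re (u t)) with (x t). change (Im (u t)) with (y t).
  set (S := sqrt _) in *. rewrite <- ES. field. lra.
Qed.

Lemma PIII_log_deriv_identity (a b u du d2u : C) (t : R) :
  0 < t -> u <> 0%C ->
  d2u = Cplus (Cplus (Cplus
              (Cdiv (Cmult du du) u)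
              (Copp (Cdiv du (RtoC t))))
              (Cmult (Cinv (RtoC t))
                     (Cplus (Copp (Cmult (RtoC 8) (Cmult u u)))
                            (Cmult (RtoC 2) (Cmult a b)))))
              (Cdiv (Cmult b b) u) ->
  (du / u + t * ((d2u * u - du * du) / (u * u)) =
   - 8 * u + 2 * (a * b) / u + t * (b * b / (u * u)))%C.
Proof.
intros Ht Hu ->.
assert (RtoC t <> 0%C) by (intro E; apply RtoC_inj in E; lra).
field. split; assumption.
Qed.

Lemma Re_div_le_Cmod (c z : C) : 1 <= Cmod z -> Re (c / z)%C <= Cmod c.
Proof.
intro Hz.
assert (Hz0 : z <> 0%C) by (apply Cmod_gt_0; lra).
eapply Rle_trans; [apply Rle_abs |]. eapply Rle_trans; [apply re_le_Cmod |].
rewrite Cmod_div by exact Hz0.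
pose proof (Cmod_ge_0 c). apply Rmult_le_reg_r with (Cmod z); [lra |].
unfold Rdiv. rewrite Rmult_assoc, Rinv_l by lra. nra.
Qed.

Lemma Re_PIII_log_deriv_rhs_le (a b u : C) (t p : R) :
  0 < t <= p -> 0 < Re u -> 1 <= Cmod u ->
  Re (- 8 * u + 2 * (a * b) / u + t * (b * b / (u * u)))%C <= Cmod (2 * (a * b)) + p * Cmod (b * b).
Proof.
intros Ht Hre Hu.
rewrite !re_plus, !re_scal_l.
assert (Huu : 1 <= Cmod (u * u)%C) by (rewrite Cmod_mult; nra).
pose proof (Re_div_le_Cmod (2 * (a * b)) u Hu).
pose proof (Re_div_le_Cmod (b * b) (u * u) Huu).
pose proof (Cmod_ge_0 (b * b)).
assert (t * Re (b * b / (u * u))%C <= p * Cmod (b * b)).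
{ apply Rle_trans with (t * Cmod (b * b)); [apply Rmult_le_compat_l |]; nra. }
lra.
Qed.

Lemma le_of_is_derive_le (f df : R -> R) (a b L : R) :
  (forall s, a <= s < b -> is_derive f s (df s)) ->
  (forall s, a <= s < b -> df s <= L) ->
  forall s, a <= s < b -> f s <= f a + L * (s - a).
Proof.
intros Hd Hb s Hs.
destruct (Req_dec s a) as [-> | Hsa]; [lra |].
destruct (MVT_gen f a s df) as [c [Hc E]]; rewrite Rmin_left, Rmax_right in * by lra.
- intros x Hx. apply Hd. lra.
- intros x Hx. apply continuity_pt_filterlim, (ex_derive_continuous f x).
  exists (df x). apply Hd. lra.
- assert (df c * (s - a) <= L * (s - a)) by (apply Rmult_le_compat_r; [lra | apply Hb; lra]).
  lra.
Qed.

Lemma is_derive_id_mult (f : R -> R) t df :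
  is_derive f t df -> is_derive (fun s => s * f s) t (f t + t * df).
Proof.
intro Hf. auto_derive.
- eexists; eassumption.
- rewrite (is_derive_unique (fun s : R => f s) _ _ Hf). ring.
Qed.

Lemma PIII_Cmod_bounded_left (a b : C) (u du d2u : R -> C) (t0 p : R) :
  0 < t0 < p ->
  (forall t, t0 <= t < p -> PIII_eq a b u du d2u t /\ 0 < Re (u t) /\ 1 <= Cmod (u t)) ->
  exists B, forall t, t0 <= t < p -> Cmod (u t) <= B.
Proof.
intros Hp Hsol.
assert (Hu0 : forall t, t0 <= t < p -> u t <> 0%C).
{ intros t Ht. apply Cmod_gt_0. destruct (Hsol t Ht) as [_ [_ H]]. lra. }
set (K := Cmod (2 * (a * b)) + p * Cmod (b * b)).
set (w := fun s => s * Re (du s / u s)%C).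
assert (Hw : forall t, t0 <= t < p -> w t <= w t0 + K * (t - t0)).
{ apply (le_of_is_derive_le w
    (fun t => Re (du t / u t)%C + t * Re ((d2u t * u t - du t * du t) / (u t * u t))%C)).
  - intros t Ht. destruct (Hsol t Ht) as [[Hu [Hdu _]] _].
    apply is_derive_id_mult, (is_derive_Re_Cdiv du u t _ _ Hdu Hu (Hu0 t Ht)).
  - intros t Ht. destruct (Hsol t Ht) as [[_ [_ Hode]] [Hre Hu1]].
    rewrite <- re_scal_l, <- re_plus,
      (PIII_log_deriv_identity a b (u t) (du t) (d2u t) t ltac:(lra) (Hu0 t Ht) Hode).
    apply Re_PIII_log_deriv_rhs_le; lra. }
assert (HK : 0 <= K).
{ pose proof (Cmod_ge_0 (2 * (a * b))). pose proof (Cmod_ge_0 (b * b)). unfold K. nra. }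
set (M := Rabs (w t0) + K * p).
assert (HM : 0 <= M) by (pose proof (Rabs_pos (w t0)); unfold M; nra).
assert (Hlog : forall t, t0 <= t < p ->
  ln (Cmod (u t)) <= ln (Cmod (u t0)) + M / t0 * (t - t0)).
{ apply (le_of_is_derive_le (fun t => ln (Cmod (u t))) (fun t => Re (du t / u t)%C)).
  - intros t Ht. destruct (Hsol t Ht) as [[Hu _] _].
    exact (is_derive_ln_Cmod u t _ Hu (Hu0 t Ht)).
  - intros t Ht. specialize (Hw t Ht).
    assert (Hwt : w t <= M) by (pose proof (Rle_abs (w t0)); unfold M; nra).
    replace (Re (du t / u t)%C) with (w t / t) by (unfold w; field; lra).
    apply Rle_trans with (M / t); unfold Rdiv.
    + apply Rmult_le_compat_r; [left; apply Rinv_0_lt_compat |]; lra.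
    + apply Rmult_le_compat_l, Rinv_le_contravar; lra. }
exists (exp (ln (Cmod (u t0)) + M / t0 * p)).
intros t Ht. specialize (Hlog t Ht).
apply Rnot_lt_le. intro Hlt. apply ln_increasing in Hlt; [| apply exp_pos].
rewrite ln_exp in Hlt.
assert (0 <= M / t0) by (apply Rdiv_le_0_compat; lra).
nra.
Qed.

Lemma is_pole_Cmod_gt (u : R -> C) (p M : R) :
  is_pole u p -> exists d, 0 < d /\ forall t, t <> p -> Rabs (t - p) < d -> M < Cmod (u t).
Proof.
intro Hpole.
destruct (Hpole (fun y => M < y) (ex_intro _ M (fun x Hx => Hx))) as [d Hd].
exists d. split; [apply cond_pos |]. intros t Htp Ht. exact (Hd t Ht Htp).
Qed.

Lemma is_pole_unbounded_left (u : R -> C) (p t0 B : R) :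
  t0 < p -> is_pole u p -> exists t, t0 <= t < p /\ B < Cmod (u t).
Proof.
intros Ht0 Hpole.
destruct (is_pole_Cmod_gt u p B Hpole) as [d [Hd Hbig]].
pose proof (Rmin_l d (p - t0)). pose proof (Rmin_r d (p - t0)).
assert (0 < Rmin d (p - t0)) by (apply Rmin_glb_lt; lra).
exists (p - Rmin d (p - t0) / 2). split; [lra |].
apply Hbig; [lra |]. rewrite Rabs_left; lra.
Qed.

Lemma isolated_pole_left_interval (u : R -> C) (P : R -> Prop) (p : R) :
  0 < p -> isolated_in P p -> is_pole u p ->
  exists t0, 0 < t0 < p /\ forall t, t0 <= t < p -> ~ P t /\ 1 <= Cmod (u t).
Proof.
intros Hp [eps [Heps Hiso]] Hpole.
destruct (is_pole_Cmod_gt u p 1 Hpole) as [e [He Hbig]].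
set (d := Rmin (Rmin eps e) p).
assert (Hd : 0 < d /\ d <= eps /\ d <= e /\ d <= p).
{ unfold d. pose proof (Rmin_l (Rmin eps e) p). pose proof (Rmin_r (Rmin eps e) p).
  pose proof (Rmin_l eps e). pose proof (Rmin_r eps e).
  assert (0 < Rmin (Rmin eps e) p) by (repeat apply Rmin_glb_lt; lra). lra. }
exists (p - d / 2). split; [lra |].
intros t Ht. assert (Hdist : Rabs (t - p) = p - t) by (rewrite Rabs_left; lra).
split.
- apply Hiso. rewrite Hdist. lra.
- left. apply Hbig; [lra | rewrite Hdist; lra].
Qed.

Theorem lemma3 (a b : C) (u du d2u : R -> C) (P : R -> Prop)
  (HP : forall p, 0 < p -> P p -> isolated_in P p /\ is_pole u p)
  (Hsol : forall tau, 0 < tau -> ~ P tau -> PIII_eq a b u du d2u tau)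
  (Hre : forall tau, 0 < tau -> ~ P tau -> 0 < Re (u tau)) :
  forall tau, 0 < tau -> ~ P tau.
Proof.
intros p Hp HPp.
destruct (HP p Hp HPp) as [Hiso Hpole].
destruct (isolated_pole_left_interval u P p Hp Hiso Hpole) as [t0 [Ht0 Hleft]].
destruct (PIII_Cmod_bounded_left a b u du d2u t0 p Ht0) as [B HB].
{ intros t Ht. destruct (Hleft t Ht) as [HPt Hu1].
  assert (Ht' : 0 < t) by lra.
  exact (conj (Hsol t Ht' HPt) (conj (Hre t Ht' HPt) Hu1)). }
destruct (is_pole_unbounded_left u p t0 B) as [t [Ht HBt]]; [lra | exact Hpole |].
specialize (HB t Ht). lra.
Qed.
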